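(* Let $R$ be a ring and $M$ a projective left $R$-module which is 2-primal. Then $\mathcal N_s(M)=\langle E_M(0)\rangle=\beta_{co}(M)=\beta(M)$. In particular the zero submodule of $M$ satisfies both the complete radical formula and the radical formula.
   Context: Rings are associative with identity; modules are unital left modules. A submodule $P$ of $M$ is prime if $RM\not\subseteq P$ and for every ideal $A$ of $R$ and submodule $K$ with $AK\subseteq P$, $K\subseteq P$ or $AM\subseteq P$; completely prime if $RM\not\subseteq P$ and $rm\in P$ implies $m\in P$ or $rM\subseteq P$. $\beta(M)$ (resp. $\beta_{co}(M)$) is the intersection of all prime (resp. completely prime) submodules ($=M$ if none). $M$ is 2-primal if $\beta(M)=\beta_{co}(M)$. $E_M(0)=\{rm: r\in R,m\in M, r^km=0\text{ for some }k\in\mathbb N\}$, $\langle E_M(0)\rangle$ the submodule generated. A submodule $N$ satisfies the radical formula (resp. complete radical formula) if $\langle E_M(N)\rangle$ equals the intersection of all prime (resp. completely prime) submodules containing $N$. $\mathcal N_s(M)$ is the set of strongly nilpotent elements: $m=\sum_{i=1}^r a_im_i$ ($a_i\in R,m_i\in M$) such that for each $i$ and every sequence $a_{i1}=a_i$, $a_{i,n+1}\in a_{in}Ra_{in}$, there is $k$ with $a_{ik}Rm_i=0$. *)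

From mathcomp Require Import all_boot all_algebra.
Set Implicit Arguments. Unset Strict Implicit. Unset Printing Implicit Defensive.
Import GRing.Theory.
Local Open Scope ring_scope.

Section ModuleDefs.
Variables (R : pzRingType) (M : lmodType R).

Definition rlinear (N N' : lmodType R) (f : N -> N') : Prop :=
  forall (a : R) (x y : N), f (a *: x + y) = a *: f x + f y.

Definition is_submodule (P : M -> Prop) : Prop :=
  [/\ P 0, (forall x y, P x -> P y -> P (x + y)) &
      (forall (a : R) x, P x -> P (a *: x))].

Definition is_ideal (A : R -> Prop) : Prop :=
  [/\ A 0, (forall x y, A x -> A y -> A (x + y)),
      (forall r a, A a -> A (r * a)) & (forall r a, A a -> A (a * r))].

Definition subset_M (A B : M -> Prop) : Prop := forall x, A x -> B x.

Definition gen_sub (S : M -> Prop) : M -> Prop :=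
  fun x => forall P, is_submodule P -> subset_M S P -> P x.

Definition prod_IS (A : R -> Prop) (K : M -> Prop) : M -> Prop :=
  gen_sub (fun x => exists a k, [/\ A a, K k & x = a *: k]).

Definition allR : R -> Prop := fun _ => True.
Definition allM : M -> Prop := fun _ => True.

Definition prime_sub (P : M -> Prop) : Prop :=
  [/\ is_submodule P, ~ subset_M (prod_IS allR allM) P &
      forall (A : R -> Prop) (K : M -> Prop), is_ideal A -> is_submodule K ->
        subset_M (prod_IS A K) P -> subset_M K P \/ subset_M (prod_IS A allM) P].

Definition cprime_sub (P : M -> Prop) : Prop :=
  [/\ is_submodule P, ~ subset_M (prod_IS allR allM) P &
      forall (r : R) (m : M), P (r *: m) -> P m \/ (forall m', P (r *: m'))].

(* beta(M), beta_co(M): intersections (= M if there are none) *)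
Definition beta : M -> Prop := fun x => forall P, prime_sub P -> P x.
Definition beta_co : M -> Prop := fun x => forall P, cprime_sub P -> P x.

Definition two_primal : Prop := forall x, beta x <-> beta_co x.

Definition E_M (N : M -> Prop) : M -> Prop :=
  fun x => exists (r : R) (m : M) (k : nat), N (r ^+ k *: m) /\ x = r *: m.

Definition radical_formula (N : M -> Prop) : Prop :=
  forall x, gen_sub (E_M N) x <-> (forall P, prime_sub P -> subset_M N P -> P x).

Definition complete_radical_formula (N : M -> Prop) : Prop :=
  forall x, gen_sub (E_M N) x <-> (forall P, cprime_sub P -> subset_M N P -> P x).

Definition sn_pair (a : R) (m : M) : Prop :=
  forall s : nat -> R, s 0%N = a ->
    (forall n, exists r, s n.+1 = s n * r * s n) ->
    exists k, forall r, (s k * r) *: m = 0.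

Definition Ns : M -> Prop :=
  fun x => exists (n : nat) (a : 'I_n -> R) (m : 'I_n -> M),
    x = \sum_(i < n) a i *: m i /\ forall i, sn_pair (a i) (m i).

End ModuleDefs.

Definition projective (R : pzRingType) (M : lmodType R) : Prop :=
  forall (N N' : lmodType R) (g : N -> N') (f : M -> N'),
    rlinear g -> rlinear f -> (forall y, exists x, g x = y) ->
    exists h : M -> N, rlinear h /\ forall x, g (h x) = f x.

From mathcomp Require Import all_boot all_algebra.
From HB Require Import structures.
From mathcomp Require Import finmap.
From mathcomp.multinomials Require Import monalg.
From mathcomp.classical Require Import boolp classical_sets.
Set Implicit Arguments. Unset Strict Implicit. Unset Printing Implicit Defensive.
Import GRing.Theory.
Local Open Scope ring_scope.

(* The inclusions Ns ⊆ <E_M(0)> ⊆ β_co ⊆ β hold in any module (the last by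
   2-primality, as an equality), so it remains to show β ⊆ Ns.  Projectivity
   splits the surjection from the free module on M, (r_m) ↦ Σ r_m m, by a linear
   h.  If a coefficient c = h(x)_k were not strongly nilpotent, a sequence
   c = s_0, s_(n+1) ∈ s_n R s_n avoiding 0 would form an m-system, so Zorn gives a
   prime ideal p avoiding it; the elements whose h-coefficients all lie in p
   then form a prime submodule missing x.  So for x ∈ β every h(x)_k is strongly
   nilpotent, and x = Σ_k h(x)_k k lies in Ns. *)

Section FreeLmod.
Variables (R : pzRingType) (K : choiceType).

(* monalg provides this module structure only over nontrivial rings. *)
Definition free_lmod := {malg R[K]}.
HB.instance Definition _ := GRing.Zmodule.on free_lmod.

Definition free_scale (c : R) (g : free_lmod) : free_lmod :=
  [malg k in msupp g => c * g@_k].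

Lemma free_scaleE c g k : (free_scale c g)@_k = c * g@_k.
Proof. by rewrite mcoeffE; case: msuppP; rewrite ?mulr0. Qed.

Lemma free_scaleA c1 c2 g :
  free_scale c1 (free_scale c2 g) = free_scale (c1 * c2) g.
Proof. by apply/malgP=> k; rewrite !free_scaleE mulrA. Qed.

Lemma free_scale1 g : free_scale 1 g = g.
Proof. by apply/malgP=> k; rewrite free_scaleE mul1r. Qed.

Lemma free_scaleDr c g1 g2 :
  free_scale c (g1 + g2) = free_scale c g1 + free_scale c g2.
Proof. by apply/malgP=> k; rewrite !(mcoeffD, free_scaleE) mulrDr. Qed.

Lemma free_scaleDl g c1 c2 :
  free_scale (c1 + c2) g = free_scale c1 g + free_scale c2 g.
Proof. by apply/malgP=> k; rewrite !(mcoeffD, free_scaleE) mulrDl. Qed.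

HB.instance Definition _ := GRing.Zmodule_isLmodule.Build R free_lmod
  free_scaleA free_scale1 free_scaleDr free_scaleDl.

Lemma free_coefZ c (g : free_lmod) k : (c *: g)@_k = c * g@_k.
Proof. exact: free_scaleE. Qed.

Lemma free_msuppZ_le c (g : free_lmod) : (msupp (c *: g) `<=` msupp g)%fset.
Proof.
apply/fsubsetP=> k; rewrite -!mcoeff_neq0 free_coefZ.
by apply: contraNneq => ->; rewrite mulr0.
Qed.

End FreeLmod.

Section RLinear.
Variables (R : pzRingType) (N N' : lmodType R) (f : N -> N').
Hypothesis f_lin : rlinear f.

Lemma rlinear0 : f 0 = 0.
Proof.
have := f_lin 1 0 0; rewrite !scale1r addr0 => e.
by apply: (addrI (f 0)); rewrite addr0 -e.
Qed.

Lemma rlinearD x y : f (x + y) = f x + f y.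
Proof. by have := f_lin 1 x y; rewrite !scale1r. Qed.

Lemma rlinearZ a x : f (a *: x) = a *: f x.
Proof. by have := f_lin a x 0; rewrite !addr0 rlinear0 addr0. Qed.

End RLinear.

Section LinearCombination.
Variables (R : pzRingType) (M : lmodType R).

Definition lincomb (g : free_lmod R M) : M := \sum_(k <- msupp g) g@_k *: k.

Lemma lincombEw (g : free_lmod R M) (d : {fset M}) : (msupp g `<=` d)%fset ->
  lincomb g = \sum_(k <- d) g@_k *: k.
Proof.
move=> sub; apply: big_fset_incl => // k _ kNg.
by rewrite mcoeff_outdom // scale0r.
Qed.

Lemma lincomb_rlinear : rlinear lincomb.
Proof.
move=> a g1 g2; set d := (msupp g1 `|` msupp g2)%fset.
have sub1 : (msupp g1 `<=` d)%fset by apply: fsubsetUl.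
have sub2 : (msupp g2 `<=` d)%fset by apply: fsubsetUr.
have sub12 : (msupp (a *: g1 + g2) `<=` d)%fset.
  by apply: fsubset_trans (msuppD_le _ _) _; apply: fsetUSS => //; apply: free_msuppZ_le.
rewrite (lincombEw sub1) (lincombEw sub2) (lincombEw sub12) scaler_sumr -big_split.
by apply: eq_bigr => k _; rewrite mcoeffD free_coefZ scalerDl scalerA.
Qed.

Lemma lincombU (x : M) : lincomb << x >> = x.
Proof. by rewrite (lincombEw msuppU_le) big_seq_fset1 mcoeffUU scale1r. Qed.

Lemma projective_lincomb_section : projective M ->
  exists h : M -> free_lmod R M, rlinear h /\ forall x, lincomb (h x) = x.
Proof.
move=> projM; apply: projM lincomb_rlinear _ _ => [a x y | x] //.
by exists << x >>; apply: lincombU.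
Qed.

End LinearCombination.

Section PrimeIdeals.
Variable R : pzRingType.

(* An ideal or the empty set; admitting the latter makes the empty chain
   harmless in Zorn's lemma. *)
Definition ideal_closed (X : R -> Prop) : Prop :=
  [/\ forall x y, X x -> X y -> X (x + y), forall r a, X a -> X (r * a)
    & forall r a, X a -> X (a * r)].

Definition prime_ideal (p : R -> Prop) : Prop :=
  is_ideal p /\ forall a b, (forall r, p (a * r * b)) -> p a \/ p b.

Definition m_sequence (s : nat -> R) : Prop :=
  forall n, exists r, s n.+1 = s n * r * s n.

Definition m_system (S : R -> Prop) : Prop :=
  forall a b, S a -> S b -> exists r, S (a * r * b).

Definition ideal_adjoin (X : R -> Prop) (a : R) : R -> Prop :=
  fun x => forall Y, ideal_closed Y -> (forall y, X y -> Y y) -> Y a -> Y x.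

Lemma ideal_adjoin_closed X a : ideal_closed (ideal_adjoin X a).
Proof.
split=> [x y Xx Xy | r x Xx | r x Xx] Y [Yadd Yl Yr] XY Ya.
- exact: Yadd (Xx Y (And3 Yadd Yl Yr) XY Ya) (Xy Y (And3 Yadd Yl Yr) XY Ya).
- exact: Yl (Xx Y (And3 Yadd Yl Yr) XY Ya).
- exact: Yr (Xx Y (And3 Yadd Yl Yr) XY Ya).
Qed.

Lemma ideal_adjoin_mul X a b : ideal_closed X -> (forall r, X (a * r * b)) ->
  forall x y, ideal_adjoin X a x -> ideal_adjoin X b y -> forall r, X (x * r * y).
Proof.
move=> [Xadd Xl Xr] Xab x y Hx Hy.
have aRy : forall r, X (a * r * y).
  apply: (Hy (fun y => forall r, X (a * r * y))) => //.
  split=> [y1 y2 H1 H2 r | t y1 H1 r | t y1 H1 r].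
  - by rewrite mulrDr; apply: Xadd.
  - by have := H1 (r * t); rewrite !mulrA.
  - by rewrite mulrA; apply: Xr.
  by move=> y1 Xy1 r; apply: Xl.
apply: (Hx (fun x => forall r, X (x * r * y))) => //.
split=> [x1 x2 H1 H2 r | t x1 H1 r | t x1 H1 r].
- by rewrite !mulrDl; apply: Xadd.
- by rewrite -!mulrA; apply: Xl; rewrite mulrA.
- by have := H1 (t * r); rewrite !mulrA.
by move=> x1 Xx1 r; rewrite -mulrA; apply: Xr.
Qed.

Lemma ideal_closed_bigcup (F : set (set R)) :
  (forall X, F X -> ideal_closed X) -> total_on F subset ->
  ideal_closed (\bigcup_(X in F) X)%classic.
Proof.
move=> Fcl Ftot; split=> [x y [X FX Xx] [Y FY Yy] | r x [X FX Xx] | r x [X FX Xx]].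
- have [XY|YX] := Ftot X Y FX FY.
    by exists Y => //; have [Yadd _ _] := Fcl Y FY; apply: Yadd => //; apply: XY.
  by exists X => //; have [Xadd _ _] := Fcl X FX; apply: Xadd => //; apply: YX.
- by exists X => //; have [_ Xl _] := Fcl X FX; apply: Xl.
- by exists X => //; have [_ _ Xr] := Fcl X FX; apply: Xr.
Qed.

Lemma m_system_prime_ideal S : m_system S -> ~ S 0 ->
  exists p, prime_ideal p /\ forall s, S s -> ~ p s.
Proof.
move=> mS nS0.
pose avoiding X := ideal_closed X /\ forall s, S s -> ~ X s.
have [A [[Acl AS] Amax]] :
    exists A, avoiding A /\ forall B, (A `<` B)%classic -> ~ avoiding B.
  apply: Zorn_bigcup => F FP Ftot; split.
    by apply: ideal_closed_bigcup => // X /FP [].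
  by move=> s Ss [X /FP [_ XS] Xs]; apply: XS Ss Xs.
have [Aadd Al Ar] := Acl.
have A0 : A 0.
  apply: contrapT => nA0; apply: (Amax (fun x => x = 0)).
    split=> [x Ax | sub]; last exact/nA0/sub.
    by case: nA0; rewrite -(mul0r x); apply: Al.
  split=> [|s Ss s0]; last by apply: nS0; rewrite -s0.
  by split=> [x y -> -> | r a -> | r a ->]; rewrite ?addr0 ?mulr0 ?mul0r.
have meetS c : ~ A c -> exists2 s, S s & ideal_adjoin A c s.
  move=> nAc; apply: contrapT => nmeet; apply: (Amax (ideal_adjoin A c)).
    split=> [y Ay Y _ AY _ | sub]; first exact: AY.
    by apply: nAc; apply: sub => Y _ _.
  split=> [|s Ss Hs]; first exact: ideal_adjoin_closed.
  by apply: nmeet; exists s.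
exists A; split=> //; split=> // a b Aab.
have [Aa|nAa] := pselect (A a); first by left.
have [Ab|nAb] := pselect (A b); first by right.
have [s Ss Hs] := meetS a nAa; have [t St Ht] := meetS b nAb.
have [r Ssrt] := mS s t Ss St.
by case: (AS _ Ssrt); apply: (ideal_adjoin_mul Acl Aab Hs Ht).
Qed.

Definition strongly_nilpotent (a : R) : Prop :=
  forall s : nat -> R, s 0%N = a -> m_sequence s -> exists k, s k = 0.

Lemma m_sequence_m_system (s : nat -> R) : m_sequence s ->
  m_system (fun x => exists n, x = s n).
Proof.
move=> sS _ _ [i ->] [j ->].
have left_mul i' d : exists u, s (i' + d)%N = s i' * u.
  elim: d => [|d [u e]]; first by exists 1; rewrite addn0 mulr1.
  have [r er] := sS (i' + d)%N.
  by exists (u * r * s (i' + d)%N); rewrite addnS er {1}e !mulrA.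
have right_mul j' d : exists v, s (j' + d)%N = v * s j'.
  elim: d => [|d [v e]]; first by exists 1; rewrite addn0 mul1r.
  have [r er] := sS (j' + d)%N.
  by exists (s (j' + d)%N * r * v); rewrite addnS er {2}e !mulrA.
pose n := maxn i j.
have [u eu] := left_mul i (n - i)%N; rewrite subnKC ?leq_maxl // in eu.
have [v ev] := right_mul j (n - j)%N; rewrite subnKC ?leq_maxr // in ev.
have [r er] := sS n.
by exists (u * r * v), n.+1; rewrite er {1}eu ev !mulrA.
Qed.

Lemma prime_radical_strongly_nilpotent a :
  (forall p, prime_ideal p -> p a) -> strongly_nilpotent a.
Proof.
move=> rad s s0 sS; apply: contrapT => nsn.
have nS0 : ~ exists n, 0 = s n by move=> [n sn0]; apply: nsn; exists n.
have [p [pp pS]] := m_system_prime_ideal (m_sequence_m_system sS) nS0.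
by apply: (pS a); [exists 0%N | apply: rad].
Qed.

End PrimeIdeals.

Section Submodules.
Variables (R : pzRingType) (M : lmodType R).

Let zero_sub : M -> Prop := fun y => y = 0.

Lemma gen_sub_in (S : M -> Prop) x : S x -> gen_sub S x.
Proof. by move=> Sx P _ SP; apply: SP. Qed.

Lemma gen_sub_min (S P : M -> Prop) : is_submodule P -> subset_M S P ->
  subset_M (gen_sub S) P.
Proof. by move=> Psub SP x; apply. Qed.

Lemma submodule_meet (F : (M -> Prop) -> Prop) :
  (forall P, F P -> is_submodule P) -> is_submodule (fun x => forall P, F P -> P x).
Proof.
move=> Fsub; split=> [P /Fsub [] | x y Hx Hy P FP | a x Hx P FP] //.
- by have [_ Padd _] := Fsub P FP; apply: Padd; [apply: Hx | apply: Hy].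
- by have [_ _ PZ] := Fsub P FP; apply: PZ; apply: Hx.
Qed.

Lemma gen_sub_submodule (S : M -> Prop) : is_submodule (gen_sub S).
Proof.
split=> [P [] // | x y Hx Hy P Psub SP | a x Hx P Psub SP].
- by have [_ Padd _] := Psub; apply: Padd; [apply: Hx | apply: Hy].
- by have [_ _ PZ] := Psub; apply: PZ; apply: Hx.
Qed.

Lemma cprime_sub_expZ (P : M -> Prop) (r : R) (m : M) (k : nat) :
  cprime_sub P -> P (r ^+ k *: m) -> P (r *: m).
Proof.
move=> [[_ _ PZ] _ Pcp]; elim: k => [|k IHk]; first by rewrite expr0 scale1r; apply: PZ.
by rewrite exprS -scalerA => /Pcp [/IHk | ].
Qed.

Lemma gen_E_M0_sub_beta_co : subset_M (gen_sub (E_M zero_sub)) (beta_co (M:=M)).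
Proof.
apply: gen_sub_min; first by apply: submodule_meet => P [].
move=> _ [r [m [k [rkm0 ->]]]] P cP; apply: (cprime_sub_expZ (k := k) cP).
by rewrite rkm0; case: cP => [[]].
Qed.

Lemma sn_pair_E_M0 a (m : M) : sn_pair a m -> E_M zero_sub (a *: m).
Proof.
move=> snam; have [|k amk] := snam (fun n => a ^+ (2 ^ n)) (expr1 a).
  by move=> n; exists 1; rewrite mulr1 -exprD addnn -mul2n -expnS.
by exists a, m, (2 ^ k)%N; split=> //; have := amk 1; rewrite mulr1.
Qed.

Lemma Ns_sub_gen_E_M0 : subset_M (Ns (M:=M)) (gen_sub (E_M zero_sub)).
Proof.
move=> _ [n [a [m [-> sn]]]].
have [G0 Gadd _] := gen_sub_submodule (E_M zero_sub).
apply: (big_ind (gen_sub _)) => // i _.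
by apply: gen_sub_in; apply: sn_pair_E_M0.
Qed.

Lemma strongly_nilpotent_sn_pair a (m : M) : strongly_nilpotent a -> sn_pair a m.
Proof.
move=> sna s s0 sS; have [k sk0] := sna s s0 sS.
by exists k => r; rewrite sk0 mul0r scale0r.
Qed.

Section CoefPreimage.
Variables (K : choiceType) (h : M -> free_lmod R K).
Hypothesis h_lin : rlinear h.

Definition coef_preimage (p : R -> Prop) : M -> Prop :=
  fun m => forall k, p ((h m)@_k).

Lemma coef_preimage_submodule p : is_ideal p -> is_submodule (coef_preimage p).
Proof.
move=> [p0 padd pl _]; split=> [k | x y Hx Hy k | a x Hx k].
- by rewrite rlinear0 // mcoeff0.
- by rewrite rlinearD // mcoeffD; apply: padd.
- by rewrite rlinearZ // free_coefZ; apply: pl.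
Qed.

Lemma coef_preimage_prime p x : prime_ideal p -> ~ coef_preimage p x ->
  prime_sub (coef_preimage p).
Proof.
move=> [pI pprime] nPx; have [_ _ _ pr] := pI.
have Psub := coef_preimage_submodule pI.
split=> // [sub | A N [_ _ _ Ar] _ AN_P].
  by apply: nPx; apply: sub; apply: gen_sub_in; exists 1, x; rewrite scale1r.
have [NP|] := pselect (subset_M N (coef_preimage p)); first by left.
rewrite /subset_M => /existsNP [y /not_implyP [Ny /existsNP [k nphyk]]].
right; apply: gen_sub_min => // _ [a [m [Aa _ ->]]].
have pa : p a.
  suff /pprime [// | /nphyk //] : forall r, p (a * r * (h y)@_k).
  move=> r; have aryP : coef_preimage p ((a * r) *: y).
    by apply: AN_P; apply: gen_sub_in; exists (a * r), y; split=> //; apply: Ar.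
  by have := aryP k; rewrite rlinearZ // free_coefZ.
by move=> k'; rewrite rlinearZ // free_coefZ; apply: pr.
Qed.

Lemma beta_coef_strongly_nilpotent x : beta x -> forall k, strongly_nilpotent ((h x)@_k).
Proof.
move=> betax k; apply: prime_radical_strongly_nilpotent => p pp; apply: contrapT => npk.
have Pprime : prime_sub (coef_preimage p).
  by apply: (coef_preimage_prime (x := x) pp) => /(_ k).
by apply: npk; apply: betax Pprime k.
Qed.

End CoefPreimage.

Lemma beta_sub_Ns : projective M -> subset_M (beta (M:=M)) (Ns (M:=M)).
Proof.
move=> /projective_lincomb_section [h [h_lin hK]] x betax.
pose s := msupp (h x).
exists (size s), (fun i => (h x)@_(nth x s i)), (fun i => nth x s i); split.
  by rewrite -{1}(hK x) /lincomb (big_nth x) big_mkord.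
by move=> i; apply/strongly_nilpotent_sn_pair/beta_coef_strongly_nilpotent.
Qed.

End Submodules.

Theorem theorem4p10 (R : pzRingType) (M : lmodType R) :
  projective M -> two_primal M ->
  [/\ (forall x : M, Ns x <-> gen_sub (E_M (fun y : M => y = 0)) x),
      (forall x : M, gen_sub (E_M (fun y : M => y = 0)) x <-> beta_co x),
      (forall x : M, beta_co x <-> beta x),
      complete_radical_formula (fun y : M => y = 0) &
      radical_formula (fun y : M => y = 0)].
Proof.
move=> projM twoM.
have NsE := @Ns_sub_gen_E_M0 R M; have EBco := @gen_E_M0_sub_beta_co R M.
have BcoB x : beta_co x -> beta x := (twoM x).2.
have BNs := beta_sub_Ns projM.
have contain0 (P : M -> Prop) : is_submodule P -> subset_M (fun y => y = 0) P.
  by move=> [P0 _ _] _ ->.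
split=> x; split.
- exact: NsE x.
- by move=> /EBco /BcoB /BNs.
- exact: EBco x.
- by move=> /BcoB /BNs /NsE.
- exact: BcoB x.
- exact: (twoM x).1.
- by move=> /EBco Bx P cP _; apply: Bx.
- move=> Hx; apply: NsE; apply: BNs; apply: BcoB => P cP;
  by apply: (Hx P cP); apply: contain0; case: (cP).
- by move=> /EBco /BcoB Bx P pP _; apply: Bx.
- move=> Hx; apply: NsE; apply: BNs => P pP;
  by apply: (Hx P pP); apply: contain0; case: (pP).
Qed.
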